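(* There is an absolute constant $C>0$ such that the following holds. Let $K$ be a commutative idempotent semiring, $N\geq1$, $\Sigma_N$ the set of $2N+N^2$ commuting indeterminates $\mathsf{c}_i,\mathsf{A}_{ij},\mathsf{b}_j$ ($1\le i,j\le N$), $\mathsf{K}=K[\Sigma_N]$, and $\mathsf{S}_N=\mathsf{c}(\mathsf{A}X)^*\mathsf{b}\in\mathsf{K}[[X]]$ the universal series. Then $\mathsf{S}_N$ can be written as $$\mathsf{S}_N=\mathsf{P}\oplus X^{\kappa_1c_1}\Big(\bigoplus_{1\le i\le\rho}\mathsf{u}_iX^{\mu_i}(\mathsf{q}_iX^{c_1})^*\Big)$$ with $c_1=N!$, $\kappa_1\le C\cdot N!$, $\rho\le 2^{C\cdot N!}$, $0\le\mu_i\le c_1-1$, $\mathsf{u}_i,\mathsf{q}_i\in\mathsf{K}$, $\mathsf{P}\in\mathsf{K}[X]$ of degree less than $\kappa_1c_1$, and such that $m(\mathsf{S}_N):=\max\big(\max_{0\le i<\kappa_1c_1}|\langle\mathsf{P},X^i\rangle|,\max_{1\le i\le\rho}\max(|\mathsf{u}_i|,|\mathsf{q}_i|)\big)\le 2^{C\cdot N!}$.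
   Context: $\mathsf{c}=(\mathsf{c}_i)\in\mathsf{K}^{1\times N}$, $\mathsf{A}=(\mathsf{A}_{ij})\in\mathsf{K}^{N\times N}$, $\mathsf{b}=(\mathsf{b}_j)\in\mathsf{K}^{N\times1}$ are the matrices of indeterminates; $(\mathsf{A}X)^*=\bigoplus_{k\ge0}\mathsf{A}^kX^k$, so $\langle\mathsf{S}_N,X^k\rangle=\mathsf{c}\mathsf{A}^k\mathsf{b}$. For $\mathsf{p}\in K[\Sigma_N]$, $|\mathsf{p}|$ denotes the number of monomials appearing in $\mathsf{p}$; $(aX^c)^*=\bigoplus_{k\ge0}a^kX^{kc}$. *)

(* Polynomials in the commuting indeterminates Sigma_N over a
   commutative (idempotent) semiring K are represented as finite formal sums of
   terms (monomial, coefficient); two such sums denote the same polynomial iff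
   they have the same coefficient at every monomial ([peq]).  Power series in X
   over K[Sigma_N] are functions nat -> poly (coefficient of X^n). *)
From HB Require Import structures.
From mathcomp Require Import all_boot all_order all_algebra.
Unset Printing Implicit Defensive.
Import GRing.Theory.
Local Open Scope ring_scope.

Notation var N := ('I_N + ('I_N * 'I_N) + 'I_N)%type.
Definition vc {N : nat} (i : 'I_N) : var N := inl (inl i).
Definition vA {N : nat} (i j : 'I_N) : var N := inl (inr (i, j)).
Definition vb {N : nat} (j : 'I_N) : var N := inr j.

Notation mon N := {ffun var N -> nat}.
Definition mon0 (N : nat) : mon N := [ffun => 0%N].
Definition madd {N : nat} (m1 m2 : mon N) : mon N := [ffun s => (m1 s + m2 s)%N].
Definition mvar {N : nat} (v : var N) : mon N := [ffun s => nat_of_bool (s == v)].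

Definition mpoly (K : comPzSemiRingType) (N : nat) := seq (mon N * K)%type.

Definition coef {K : comPzSemiRingType} {N : nat} (p : mpoly K N) (m : mon N) : K :=
  \sum_(t <- p | t.1 == m) t.2.
Definition peq {K : comPzSemiRingType} {N : nat} (p q : mpoly K N) : Prop :=
  forall m, coef p m = coef q m.
Definition psize {K : comPzSemiRingType} {N : nat} (p : mpoly K N) : nat :=
  size (undup [seq t.1 | t <- p & coef p t.1 != 0]).

Definition pzero (K : comPzSemiRingType) (N : nat) : mpoly K N := [::].
Definition pone (K : comPzSemiRingType) (N : nat) : mpoly K N := [:: (mon0 N, 1)].
Definition padd {K : comPzSemiRingType} {N : nat} (p q : mpoly K N) : mpoly K N := p ++ q.
Definition pmul {K : comPzSemiRingType} {N : nat} (p q : mpoly K N) : mpoly K N :=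
  [seq (madd t.1 s.1, t.2 * s.2) | t <- p, s <- q].
Definition ppow {K : comPzSemiRingType} {N : nat} (p : mpoly K N) (j : nat) : mpoly K N :=
  iter j (pmul p) (pone K N).
Definition pvar (K : comPzSemiRingType) {N : nat} (v : var N) : mpoly K N :=
  [:: (mvar v, 1)].

Definition uc (K : comPzSemiRingType) {N : nat} (i : 'I_N) : mpoly K N := pvar K (vc i).
Definition uA (K : comPzSemiRingType) {N : nat} (i j : 'I_N) : mpoly K N := pvar K (vA i j).
Definition ub (K : comPzSemiRingType) {N : nat} (j : 'I_N) : mpoly K N := pvar K (vb j).

Definition rowA (K : comPzSemiRingType) (N : nat) (v : 'I_N -> mpoly K N) (j : 'I_N)
  : mpoly K N := flatten [seq pmul (v i) (uA K i j) | i <- enum 'I_N].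
Definition cAk (K : comPzSemiRingType) (N : nat) (k : nat) : 'I_N -> mpoly K N :=
  iter k (@rowA K N) (@uc K N).

Definition series (K : comPzSemiRingType) (N : nat) := nat -> mpoly K N.

(* The universal series S_N = c (A X)^* b, with <S_N, X^k> = c A^k b. *)
Definition SN (K : comPzSemiRingType) (N : nat) : series K N :=
  fun k => flatten [seq pmul (@cAk K N k j) (ub K j) | j <- enum 'I_N].

Definition sadd {K : comPzSemiRingType} {N : nat} (f g : series K N) : series K N :=
  fun n => padd (f n) (g n).
Definition smul {K : comPzSemiRingType} {N : nat} (f g : series K N) : series K N :=
  fun n => flatten [seq pmul (f i) (g (n - i)%N) | i <- iota 0 n.+1].
Definition smono {K : comPzSemiRingType} {N : nat} (a : mpoly K N) (k : nat) : series K N :=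
  fun n => if n == k then a else pzero K N.
(* (q X^c)^* = (+)_{j >= 0} q^j X^{j c}   (used with c >= 1) *)
Definition sstar {K : comPzSemiRingType} {N : nat} (q : mpoly K N) (c : nat) : series K N :=
  fun n => if (c %| n)%N then ppow q (n %/ c)%N else pzero K N.
Definition ssum {K : comPzSemiRingType} {N : nat} (rho : nat) (F : nat -> series K N)
  : series K N := fun n => flatten [seq F i n | i <- iota 0 rho].

(* Over an idempotent semiring every coefficient of S_N is a sum of ones, hence
   is determined by its set of monomials; those of <S_N, X^n> are the monomials
   c_s A_{s w_1} ... A_{w_(n-1) w_n} b_{w_n} of the walks of length n in the
   complete digraph on N vertices.
   A walk of length at least N (N^2 + 1) + N (N F), with F = N!, contains a
   closed subwalk of length at most N whose edges all occur before it, so it can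
   be cut out without changing the edge set.  Cutting N (N F) of them, some
   length l <= N occurs F times, and since l divides F, F / l of these cycles
   form a package of total length exactly F.  Conversely a package on the edges
   of a walk can be spliced back into it.  Hence, for T = kappa1 F and mu < F,
   the monomials of degree T + mu + j F are exactly the products x y_1 ... y_j
   with x a monomial of degree T + mu and every y_t a package on the edges of x.
   Summing over the pairs (mu, x) gives S_N = P + X^T sum x X^mu (q_x X^F)^*,
   where q_x is the sum of the packages on the edges of x.  All exponents are
   at most T + F + 2, which bounds the number and the size of the terms. *)

From HB Require Import structures.
From mathcomp Require Import all_boot all_order all_algebra zify.
From Stdlib Require Import ClassicalEpsilon.
Import GRing.Theory.
Set Implicit Arguments.
Unset Strict Implicit.
Unset Printing Implicit Defensive.

Section Monomials.
Variable N : nat.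
Implicit Types m : mon N.

Lemma maddE m1 m2 v : madd m1 m2 v = m1 v + m2 v.
Proof. by rewrite ffunE. Qed.

Lemma mon0E v : mon0 N v = 0.
Proof. by rewrite ffunE. Qed.

Lemma mvarE (v u : var N) : mvar v u = (u == v).
Proof. by rewrite ffunE. Qed.

Lemma maddC m1 m2 : madd m1 m2 = madd m2 m1.
Proof. by apply/ffunP=> v; rewrite !maddE addnC. Qed.

Lemma maddA m1 m2 m3 : madd m1 (madd m2 m3) = madd (madd m1 m2) m3.
Proof. by apply/ffunP=> v; rewrite !maddE addnA. Qed.

Lemma madd0m m : madd (mon0 N) m = m.
Proof. by apply/ffunP=> v; rewrite maddE mon0E. Qed.

Lemma maddm0 m : madd m (mon0 N) = m.
Proof. by rewrite maddC madd0m. Qed.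

Definition mons_below D : seq (mon N) :=
  [seq [ffun v => val (e v)] | e : {ffun var N -> 'I_D.+1} <- enum {ffun var N -> 'I_D.+1}].

Lemma mem_mons_below D m : (forall v, m v <= D) -> m \in mons_below D.
Proof.
move=> le_D; apply/mapP; exists [ffun v => inord (m v) : 'I_D.+1]; first by rewrite mem_enum.
by apply/ffunP => v; rewrite !ffunE /= inordK // ltnS.
Qed.

Lemma size_mons_below D : size (mons_below D) = D.+1 ^ (N + N * N + N).
Proof. by rewrite size_map -cardE card_ffun !card_sum card_prod !card_ord. Qed.

Lemma size_uniq_bounded_mons D (r : seq (mon N)) : uniq r ->
  (forall m, m \in r -> forall v, m v <= D) -> size r <= D.+1 ^ (N + N * N + N).
Proof.
move=> uniq_r le_D; rewrite -size_mons_below.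
by apply: uniq_leq_size => // m /le_D; apply: mem_mons_below.
Qed.

End Monomials.

Section Walks.
Variable N : nat.
Implicit Types (s v x : 'I_N) (p w z : seq 'I_N) (es : seq ('I_N * 'I_N)).

(* A walk s w_1 ... w_n is given by its start [s] and the sequence [w] of the
   vertices it visits; its monomial is c_s A_{s w_1} ... A_{w_(n-1) w_n} b_{w_n}. *)
Definition edges p : seq ('I_N * 'I_N) := zip p (behead p).

Definition edge_mon es : mon N := [ffun v => count (fun e => vA e.1 e.2 == v) es].

Definition walk_mon s w : mon N :=
  madd (madd (mvar (vc s)) (edge_mon (edges (s :: w)))) (mvar (vb (last s w))).

Definition edge_supp (y : mon N) (e : 'I_N * 'I_N) : bool := 0 < y (vA e.1 e.2).

Lemma edges_cons2 x y p : edges [:: x, y & p] = (x, y) :: edges (y :: p).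
Proof. by []. Qed.

Lemma size_edges s w : size (edges (s :: w)) = size w.
Proof. by rewrite /edges size_zip /= minnE subSnn subn1. Qed.

Lemma edges_rcons s w x : edges (s :: rcons w x) = rcons (edges (s :: w)) (last s w, x).
Proof. by elim: w s => //= y w IH s; rewrite edges_cons2 IH. Qed.

Lemma edges_cat x p q : edges (x :: p ++ q) = edges (x :: p) ++ edges (last x p :: q).
Proof. by elim: p x => //= y p IH x; rewrite edges_cons2 IH. Qed.

Lemma edges_cat_cons p v q : edges (p ++ v :: q) = edges (rcons p v) ++ edges (v :: q).
Proof.
case: p => [|x p] //=.
by rewrite -cat_rcons edges_cat -rcons_cons last_rcons.
Qed.

Lemma edges_prefix p q : {subset edges p <= edges (p ++ q)}.
Proof. by case: p => [|x p] // e He; rewrite edges_cat mem_cat He. Qed.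

Lemma edges_take_mono p i j : i <= j -> {subset edges (take i p) <= edges (take j p)}.
Proof.
move=> le_ij e He; rewrite -(cat_take_drop i (take j p)) take_takel //.
exact: edges_prefix.
Qed.

Lemma mem_edges_split x p a b : (a, b) \in edges (x :: p) ->
  exists p1 p2, x :: p = p1 ++ a :: b :: p2.
Proof.
elim: p x => [|y p IH] x //=.
rewrite edges_cons2 in_cons => /orP [/eqP [-> ->]|/IH [p1 [p2 ->]]].
  by exists [::], p.
by exists (x :: p1), p2.
Qed.

Lemma edge_mon0 : edge_mon [::] = mon0 N.
Proof. by apply/ffunP => u; rewrite !ffunE. Qed.

Lemma edge_mon_cat es1 es2 : edge_mon (es1 ++ es2) = madd (edge_mon es1) (edge_mon es2).
Proof. by apply/ffunP=> v; rewrite maddE !ffunE count_cat. Qed.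

Lemma edge_mon_rcons es e : edge_mon (rcons es e) = madd (edge_mon es) (mvar (vA e.1 e.2)).
Proof.
by apply/ffunP=> u; rewrite -cats1 edge_mon_cat !maddE mvarE !ffunE /= addn0 eq_sym.
Qed.

Lemma edge_mon_le_size es (u : var N) : edge_mon es u <= size es.
Proof. by rewrite ffunE count_size. Qed.

Lemma edge_supp_walk_mon s w e : edge_supp (walk_mon s w) e = (e \in edges (s :: w)).
Proof.
case: e => a b; rewrite /edge_supp !maddE !mvarE /= addn0 ffunE -has_count.
apply/hasP/idP => [[[a' b'] He /eqP [<- <-]] //|He].
by exists (a, b).
Qed.

Lemma walk_mon_le s w (u : var N) : walk_mon s w u <= (size w).+2.
Proof.
have := edge_mon_le_size (edges (s :: w)) u; rewrite size_edges !maddE !mvarE.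
by case: (u == vc s); case: (u == _) => /=; lia.
Qed.

Lemma walk_insert_cycle s w v z : last v z = v -> {subset edges (v :: z) <= edges (s :: w)} ->
  exists w', [/\ size w' = size w + size z,
     walk_mon s w' = madd (walk_mon s w) (edge_mon (edges (v :: z))) &
     edges (s :: w') =i edges (s :: w)].
Proof.
case: z => [|b z] last_z sub_z.
  by exists w; rewrite addn0 /= maddm0.
have /mem_edges_split [p1 [p2 def_sw]] : (v, b) \in edges (s :: w).
  by apply: sub_z; rewrite edges_cons2 mem_head.
have [w' def_sw'] : exists w', s :: w' = p1 ++ v :: (b :: z) ++ b :: p2.
  case: p1 def_sw => [|x p1] /= [-> _]; first by exists ((b :: z) ++ b :: p2).
  by exists (p1 ++ v :: (b :: z) ++ b :: p2).
have edges_w : edges (s :: w) = edges (rcons p1 v) ++ edges (v :: b :: p2).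
  by rewrite def_sw edges_cat_cons.
have edges_w' : edges (s :: w') =
    edges (rcons p1 v) ++ edges (v :: b :: z) ++ edges (v :: b :: p2).
  by rewrite def_sw' edges_cat_cons edges_cat last_z.
have last_w' : last s w' = last s w.
  by rewrite -(last_cons s s w') -(last_cons s s w) def_sw' def_sw !last_cat /= last_cat.
exists w'; split.
- move: (congr1 size def_sw') (congr1 size def_sw).
  rewrite /= !size_cat /= !size_cat /=; lia.
- apply/ffunP => u; rewrite /walk_mon last_w' edges_w edges_w' !edge_mon_cat !maddE; lia.
- move=> e; rewrite edges_w edges_w' !mem_cat; apply/idP/idP.
    case/or3P => [->|/sub_z|->]; rewrite ?orbT //.
    by rewrite edges_w mem_cat.
  by case/orP => ->; rewrite ?orbT.
Qed.

End Walks.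

Lemma ord_collision n (T : finType) (f : 'I_n -> T) : #|T| < n ->
  exists x y : 'I_n, x < y /\ f x = f y.
Proof.
move=> card_lt; have /injectivePn [x [y neq_xy eq_f]] : ~~ injectiveb f.
  apply/injectiveP => /leq_card; rewrite card_ord; lia.
case: (ltngtP x y) => [lt_xy|lt_yx|/val_inj eq_xy]; first by exists x, y.
  by exists y, x.
by rewrite eq_xy eqxx in neq_xy.
Qed.

Section CycleRemoval.
Variable N : nat.
Implicit Types (s v : 'I_N) (L w z : seq 'I_N).

(* The pair (vertex, number of distinct edges so far) takes at most
   N (N^2 + 1) values along a walk. *)
Lemma repeat_with_stable_edges s L : N * (N * N).+1 < size L ->
  exists i j, [/\ i < j, j < size L, nth s L i = nth s L j &
    {subset edges (take j.+1 L) <= edges (take i.+1 L)}].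
Proof.
move=> size_L.
pose f (k : 'I_(size L)) : 'I_N * 'I_(N * N).+1 :=
  (nth s L k, inord #|edges (take k.+1 L)|).
have card_edges k : #|edges (take k L)| <= N * N.
  by have := max_card (mem (edges (take k L))); rewrite card_prod card_ord.
have [x [y [lt_xy [eq_nth eq_card]]]] : exists x y : 'I_(size L), x < y /\ f x = f y.
  by apply: ord_collision; rewrite card_prod !card_ord.
exists x, y; split => //.
have sub_xy : edges (take x.+1 L) \subset edges (take y.+1 L).
  by apply/subsetP; apply: edges_take_mono; rewrite ltnS ltnW.
have /subset_leqif_card [_] := sub_xy.
move: (congr1 val eq_card) => /=; rewrite !inordK ?ltnS // => ->.
by rewrite eqxx => /esym /subsetP.
Qed.

(* Shrink the repeat to one of length at most N by the pigeonhole principle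
   inside it: edges of the inner part already occur before i. *)
Lemma short_stable_repeat s L i j : i < j -> j < size L -> nth s L i = nth s L j ->
  {subset edges (take j.+1 L) <= edges (take i.+1 L)} ->
  exists i' j', [/\ i' < j' <= i' + N, j' < size L, nth s L i' = nth s L j' &
    {subset edges (take j'.+1 L) <= edges (take i'.+1 L)}].
Proof.
have [n] := ubnP (j - i); elim: n => // n IH in i j *.
move=> lt_ji_n lt_ij lt_jL eq_nth sub_ij.
case: (leqP j (i + N)) => [le_jN|lt_Nj]; first by exists i, j; rewrite lt_ij.
pose g (k : 'I_(j - i)) := nth s L (i + k).
have [x [y [lt_xy eq_g]]] : exists x y : 'I_(j - i), x < y /\ g x = g y.
  by apply: ord_collision; rewrite card_ord; lia.
have lt_y := ltn_ord y.
apply: (IH (i + x) (i + y)); rewrite ?ltn_add2l //; first lia; first lia.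
move=> e He; apply: (@edges_take_mono _ _ i.+1); first lia.
by apply/sub_ij/(@edges_take_mono _ _ (i + y).+1) => //; lia.
Qed.

Lemma split_at_repeat s L i j : i < j -> j < size L -> nth s L i = nth s L j ->
  exists p1 v z p2, [/\ L = p1 ++ v :: z ++ p2, last v z = v, size z = j - i,
    take i.+1 L = rcons p1 v & take j.+1 L = p1 ++ v :: z].
Proof.
move=> lt_ij lt_jL eq_nth; have lt_iL := ltn_trans lt_ij lt_jL.
pose v := nth s L i; pose z := take (j - i) (drop i.+1 L).
have drop_i : drop i L = v :: drop i.+1 L by rewrite (drop_nth s).
have size_z : size z = j - i by rewrite size_takel // size_drop; lia.
exists (take i L), v, z, (drop (j - i) (drop i.+1 L)); split => //.
- by rewrite cat_take_drop -drop_i cat_take_drop.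
- rewrite (last_nth s) size_z.
  have -> : v :: z = take (j - i).+1 (drop i L) by rewrite drop_i.
  by rewrite nth_take // nth_drop subnKC ?eq_nth // ltnW.
- by rewrite (take_nth s).
- have -> : j.+1 = i + (j - i).+1 by lia.
  by rewrite takeD drop_i.
Qed.

Lemma walk_remove_cycle s w : N * (N * N).+1 < (size w).+1 ->
  exists w' v z, [/\ size w = size w' + size z, 0 < size z <= N, last v z = v,
    {subset edges (v :: z) <= edges (s :: w')} &
    edges (s :: w') =i edges (s :: w) /\
    walk_mon s w = madd (walk_mon s w') (edge_mon (edges (v :: z)))].
Proof.
move=> size_w.
have [i [j [lt_ij lt_jL eq_nth sub_ij]]] := @repeat_with_stable_edges s (s :: w) size_w.
have [i' [j' [/andP [lt_ij' le_ij'] lt_jL' eq_nth' sub_ij']]] :=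
  short_stable_repeat lt_ij lt_jL eq_nth sub_ij.
have [p1 [v [z [p2 [def_L last_z size_z take_i take_j]]]]] :=
  split_at_repeat lt_ij' lt_jL' eq_nth'.
have [w' def_sw'] : exists w', s :: w' = p1 ++ v :: p2.
  case: p1 def_L {take_i take_j} => [|x p1] /= [-> _]; first by exists p2.
  by exists (p1 ++ v :: p2).
have edges_w : edges (s :: w) = edges (rcons p1 v) ++ edges (v :: z) ++ edges (v :: p2).
  by rewrite def_L edges_cat_cons edges_cat last_z.
have edges_w' : edges (s :: w') = edges (rcons p1 v) ++ edges (v :: p2).
  by rewrite def_sw' edges_cat_cons.
have sub_z : {subset edges (v :: z) <= edges (rcons p1 v)}.
  by move=> e He; rewrite -take_i; apply: sub_ij'; rewrite take_j edges_cat_cons mem_cat He orbT.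
have last_w' : last s w' = last s w.
  rewrite -(last_cons s s w') -(last_cons s s w) def_sw' def_L.
  by rewrite !last_cat /= last_cat /= last_z.
exists w', v, z; split => //.
- move: (congr1 size def_sw') (congr1 size def_L); rewrite /= !size_cat /= !size_cat /=; lia.
- by rewrite size_z; lia.
- by move=> e He; rewrite edges_w' mem_cat sub_z.
split.
- move=> e; rewrite edges_w edges_w' !mem_cat; apply/idP/idP.
    by case/orP => ->; rewrite ?orbT.
  by case/or3P => [->|/sub_z ->|->]; rewrite ?orbT.
- apply/ffunP => u; rewrite /walk_mon last_w' edges_w edges_w' !edge_mon_cat !maddE; lia.
Qed.

End CycleRemoval.

Lemma count_pigeonhole (T : eqType) n F (cs : seq T) (f : T -> nat) : 0 < n -> 0 < F ->
  (forall c, c \in cs -> 0 < f c <= n) -> n * F <= size cs ->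
  exists l, 0 < l <= n /\ F <= count (fun c => f c == l) cs.
Proof.
move=> n_gt0 F_gt0 f_range size_cs.
have size_sum : size cs <= \sum_(l <- iota 1 n) count (fun c => f c == l) cs.
  elim: cs f_range {size_cs} => //= c cs IH f_range; rewrite big_split /= -add1n.
  apply: leq_add; last by apply: IH => c' Hc'; apply: f_range; rewrite in_cons Hc' orbT.
  rewrite (bigD1_seq (f c)) ?iota_uniq ?eqxx //= mem_iota.
  by have := f_range c (mem_head _ _); lia.
have [/hasP [l]|/hasPn small] :=
  boolP (has (fun l => F <= count (fun c => f c == l) cs) (iota 1 n)).
  by rewrite mem_iota => range_l; exists l; split => //; lia.
have : \sum_(l <- iota 1 n) count (fun c => f c == l) cs <= \sum_(l <- iota 1 n) F.-1.
  by rewrite big_seq [X in _ <= X]big_seq; apply: leq_sum => l /small; lia.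
rewrite big_const_seq count_predT size_iota iter_addn_0; nia.
Qed.

Section CyclePackages.
Variable N : nat.
Implicit Types (s v : 'I_N) (w z : seq 'I_N) (E : pred ('I_N * 'I_N))
  (cs : seq ('I_N * seq 'I_N)).

(* Edge monomials of families of closed walks on the edge set [E], indexed by
   their total length. *)
Inductive cycle_sum E : nat -> mon N -> Prop :=
| cycle_sum0 : cycle_sum E 0 (mon0 N)
| cycle_sumS l y v z : cycle_sum E l y -> last v z = v -> {subset edges (v :: z) <= E} ->
    cycle_sum E (l + size z) (madd y (edge_mon (edges (v :: z)))).

Lemma cycle_sum_mono E1 E2 l y : (forall e, E1 e -> E2 e) -> cycle_sum E1 l y -> cycle_sum E2 l y.
Proof.
move=> sub_E; elim=> [|l' y' v z _ IH last_z sub_z]; first exact: cycle_sum0.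
by apply: cycle_sumS => // e /sub_z /sub_E.
Qed.

Lemma cycle_sum_le E l y : cycle_sum E l y -> forall u, y u <= l.
Proof.
elim=> [|l' y' v z _ IH _ _] u; first by rewrite mon0E.
by rewrite maddE leq_add // -(size_edges v z) edge_mon_le_size.
Qed.

Lemma walk_insert_cycle_sum E l y s w : cycle_sum E l y -> {subset E <= edges (s :: w)} ->
  exists w', [/\ size w' = size w + l, walk_mon s w' = madd (walk_mon s w) y &
    edges (s :: w') =i edges (s :: w)].
Proof.
move=> Ey sub_E; elim: Ey => [|l' y' v z _ [w1 [size_w1 mon_w1 edges_w1]] last_z sub_z].
  by exists w; rewrite addn0 maddm0.
have sub_z1 : {subset edges (v :: z) <= edges (s :: w1)}.
  by move=> e /sub_z /sub_E; rewrite edges_w1.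
have [w2 [size_w2 mon_w2 edges_w2]] := walk_insert_cycle last_z sub_z1.
exists w2; split; first by rewrite size_w2 size_w1 addnA.
  by rewrite mon_w2 mon_w1 maddA.
by move=> e; rewrite edges_w2 edges_w1.
Qed.

Definition cycles_mon cs : mon N :=
  [ffun u => \sum_(c <- cs) edge_mon (edges (c.1 :: c.2)) u].
Definition cycles_size cs : nat := \sum_(c <- cs) size c.2.

Lemma cycles_mon_cons c cs :
  cycles_mon (c :: cs) = madd (edge_mon (edges (c.1 :: c.2))) (cycles_mon cs).
Proof. by apply/ffunP => u; rewrite maddE !ffunE big_cons ffunE. Qed.

Lemma cycles_mon_cat cs1 cs2 : cycles_mon (cs1 ++ cs2) = madd (cycles_mon cs1) (cycles_mon cs2).
Proof. by apply/ffunP => u; rewrite maddE !ffunE big_cat. Qed.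

Lemma cycle_sum_cycles E cs :
  (forall c, c \in cs -> last c.1 c.2 = c.1 /\ {subset edges (c.1 :: c.2) <= E}) ->
  cycle_sum E (cycles_size cs) (cycles_mon cs).
Proof.
elim: cs => [|c cs IH] closed_cs.
  have -> : cycles_mon [::] = mon0 N by apply/ffunP => u; rewrite !ffunE big_nil.
  by rewrite /cycles_size big_nil; exact: cycle_sum0.
have [last_c sub_c] := closed_cs c (mem_head _ _).
rewrite cycles_mon_cons maddC /cycles_size big_cons addnC.
apply: cycle_sumS => //; apply: IH => c' Hc'.
by apply: closed_cs; rewrite in_cons Hc' orbT.
Qed.

Lemma walk_remove_cycles M s w : N * (N * N).+1 + N * M < (size w).+1 ->
  exists w' cs, [/\ size cs = M,
    forall c, c \in cs -> [/\ 0 < size c.2 <= N, last c.1 c.2 = c.1 &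
                            {subset edges (c.1 :: c.2) <= edges (s :: w')}],
    edges (s :: w') =i edges (s :: w),
    walk_mon s w = madd (walk_mon s w') (cycles_mon cs) &
    size w = size w' + cycles_size cs].
Proof.
elim: M w => [|M IH] w size_w.
  exists w, [::]; rewrite /cycles_size big_nil addn0; split => //.
  by apply/ffunP => u; rewrite maddE !ffunE big_nil addn0.
have [w1 [v [z [size_w1 size_z last_z sub_z [edges_w1 mon_w1]]]]] :=
  walk_remove_cycle s (leq_ltn_trans (leq_addr _ _) size_w).
have [|w' [cs [size_cs closed_cs edges_w' mon_w' size_w']]] := IH w1; first lia.
exists w', ((v, z) :: cs); split => /=.
- by rewrite size_cs.
- move=> c; rewrite in_cons => /orP [/eqP -> /=|/closed_cs //].
  by split => // e /sub_z; rewrite edges_w'.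
- by move=> e; rewrite edges_w' edges_w1.
- by rewrite mon_w1 mon_w' cycles_mon_cons /= [madd (edge_mon _) _]maddC maddA.
- by rewrite size_w1 size_w' /cycles_size big_cons /=; lia.
Qed.

(* Among N (N F) removable cycles of lengths at most N, F of them have the same
   length l; as l divides F, F / l of these form a package of total length F. *)
Lemma walk_extract_package F s w : 0 < N -> 0 < F -> (forall l, 0 < l <= N -> l %| F) ->
  N * (N * N).+1 + N * (N * F) < (size w).+1 ->
  exists w' y, [/\ size w = size w' + F, walk_mon s w = madd (walk_mon s w') y,
    cycle_sum (mem (edges (s :: w'))) F y & edges (s :: w') =i edges (s :: w)].
Proof.
move=> N_gt0 F_gt0 dvd_F size_w.
have [w1 [cs [size_cs closed_cs edges_w1 mon_w1 size_w1]]] := walk_remove_cycles s size_w.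
have [l [range_l count_l]] : exists l, 0 < l <= N /\ F <= count (fun c => size c.2 == l) cs.
  by apply: count_pigeonhole => [||c /closed_cs []|] //; rewrite size_cs.
pose package := take (F %/ l) [seq c <- cs | size c.2 == l].
pose rest := drop (F %/ l) [seq c <- cs | size c.2 == l] ++ [seq c <- cs | size c.2 != l].
have perm_cs : perm_eq (package ++ rest) cs by rewrite catA cat_take_drop perm_filterC.
have in_cs c : c \in package ++ rest -> c \in cs by rewrite (perm_mem perm_cs).
have size_package : cycles_size package = F.
  have -> : cycles_size package = \sum_(c <- package) l.
    by apply: eq_big_seq => c /mem_take; rewrite mem_filter => /andP [/eqP].
  rewrite big_const_seq count_predT iter_addn_0 size_takel; first by rewrite mulnC divnK ?dvd_F.
  by rewrite size_filter (leq_trans (leq_div _ _) count_l).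
have mon_cs : cycles_mon cs = madd (cycles_mon package) (cycles_mon rest).
  by rewrite -cycles_mon_cat; apply/ffunP => u; rewrite !ffunE (perm_big _ perm_cs).
have size_cs' : cycles_size cs = F + cycles_size rest.
  by rewrite -size_package /cycles_size -big_cat (perm_big _ perm_cs).
have rest_sum : cycle_sum (mem (edges (s :: w1))) (cycles_size rest) (cycles_mon rest).
  apply: cycle_sum_cycles => c Hc.
  have /closed_cs [] // : c \in cs by apply: in_cs; rewrite mem_cat Hc orbT.
have [w' [size_w' mon_w' edges_w']] := walk_insert_cycle_sum rest_sum (fun e He => He).
exists w', (cycles_mon package); split.
- by rewrite size_w1 size_w' size_cs'; lia.
- by rewrite mon_w1 mon_w' mon_cs [madd (cycles_mon package) _]maddC maddA.
- rewrite -size_package; apply: cycle_sum_cycles => c Hc.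
  have /closed_cs [_ last_c sub_c] : c \in cs by apply: in_cs; rewrite mem_cat Hc.
  by split => // e /sub_c; rewrite /= edges_w'.
- by move=> e; rewrite edges_w' edges_w1.
Qed.

Fixpoint sum_in (Q : mon N -> Prop) (j : nat) (m : mon N) : Prop :=
  if j is j'.+1 then exists y m', [/\ Q y, sum_in Q j' m' & m = madd y m'] else m = mon0 N.

Lemma sum_in_mono (Q1 Q2 : mon N -> Prop) j m :
  (forall y, Q1 y -> Q2 y) -> sum_in Q1 j m -> sum_in Q2 j m.
Proof.
move=> sub_Q; elim: j m => [|j IH] m //=.
by case=> y [m' [Q1y sum_m' ->]]; exists y, m'; split; [apply: sub_Q | apply: IH |].
Qed.

Lemma walk_extend F s w j y : sum_in (cycle_sum (edge_supp (walk_mon s w)) F) j y ->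
  exists w', [/\ size w' = size w + j * F, walk_mon s w' = madd (walk_mon s w) y &
    edges (s :: w') =i edges (s :: w)].
Proof.
elim: j y => [|j IH] y /=.
  by move=> ->; exists w; rewrite mul0n addn0 maddm0.
case=> y1 [y' [sum_y1 /IH [w1 [size_w1 mon_w1 edges_w1]] ->]].
have [|w2 [size_w2 mon_w2 edges_w2]] := @walk_insert_cycle_sum _ F y1 s w1 sum_y1.
  by move=> e He; rewrite edges_w1 -edge_supp_walk_mon.
exists w2; split.
- by rewrite size_w2 size_w1 mulSn; lia.
- by rewrite mon_w2 mon_w1 -maddA [madd y' y1]maddC.
- by move=> e; rewrite edges_w2 edges_w1.
Qed.

Lemma walk_decompose F L s w j : 0 < N -> 0 < F -> (forall l, 0 < l <= N -> l %| F) ->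
  N * (N * N).+1 + N * (N * F) <= L -> size w = L + j * F ->
  exists w0 y, [/\ size w0 = L, edges (s :: w0) =i edges (s :: w),
    sum_in (cycle_sum (edge_supp (walk_mon s w0)) F) j y &
    walk_mon s w = madd (walk_mon s w0) y].
Proof.
move=> N_gt0 F_gt0 dvd_F le_L; elim: j w => [|j IH] w size_w.
  by exists w, (mon0 N); rewrite size_w mul0n addn0 maddm0.
have [|w1 [y1 [size_w1 mon_w1 sum_y1 edges_w1]]] := @walk_extract_package F s w N_gt0 F_gt0 dvd_F.
  by rewrite size_w mulSn; lia.
have [|w0 [y' [size_w0 edges_w0 sum_y' mon_w0]]] := IH w1.
  by move: size_w1; rewrite size_w mulSn; lia.
exists w0, (madd y1 y'); split => //.
- by move=> e; rewrite edges_w0 edges_w1.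
- exists y1, y'; split => //; apply: cycle_sum_mono sum_y1 => e.
  by move=> He; rewrite edge_supp_walk_mon edges_w0.
- by rewrite mon_w1 mon_w0 -maddA [madd y' y1]maddC.
Qed.

End CyclePackages.

Section BinaryPolynomials.
Variables (K : comPzSemiRingType) (N : nat).
Implicit Types (p q : mpoly K N) (f g : series K N) (m : mon N).

Definition mons p : seq (mon N) := map fst p.

(* Every coefficient of [S_N] is a sum of ones; over an idempotent semiring such
   a polynomial is determined by [mons]. *)
Definition coefs1 p : bool := all (fun t => t.2 == 1%R) p.

Lemma coef_coefs1 p m : (forall x : K, (x + x)%R = x) -> coefs1 p ->
  coef p m = if m \in mons p then 1%R else 0%R.
Proof.
move=> idemK; rewrite /coef /mons; elim: p => [|t p IH] /=; first by rewrite big_nil.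
case/andP => /eqP t2 coefs_p; rewrite big_cons in_cons IH // t2.
by case: eqVneq => //= _; case: (m \in _); rewrite ?idemK ?addr0.
Qed.

Lemma peq_coefs1 p q : (forall x : K, (x + x)%R = x) -> coefs1 p -> coefs1 q ->
  mons p =i mons q -> peq p q.
Proof. by move=> idemK coefs_p coefs_q eq_mons m; rewrite !coef_coefs1 // eq_mons. Qed.

Lemma mons_cat p q : mons (p ++ q) = mons p ++ mons q.
Proof. exact: map_cat. Qed.

Lemma mem_mons_flatten (I : eqType) (r : seq I) (G : I -> mpoly K N) m :
  reflect (exists2 i, i \in r & m \in mons (G i)) (m \in mons (flatten [seq G i | i <- r])).
Proof.
have -> : mons (flatten [seq G i | i <- r]) = flatten [seq mons (G i) | i <- r].
  by elim: r => //= i r IH; rewrite mons_cat IH.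
exact: flatten_mapP.
Qed.

Lemma mem_mons_pmul p q m :
  m \in mons (pmul p q) <-> exists a b, [/\ a \in mons p, b \in mons q & m = madd a b].
Proof.
have -> : mons (pmul p q) = [seq madd a b | a <- mons p, b <- mons q].
  by rewrite /pmul /mons; elim: p => //= t p IH; rewrite map_cat IH -!map_comp.
split; first by case/allpairsP => [[a b] [/= Ha Hb ->]]; exists a, b.
by case=> a [b [Ha Hb ->]]; apply/allpairsP; exists (a, b).
Qed.

Lemma mons_pvar (v : var N) m : (m \in mons (pvar K v)) = (m == mvar v).
Proof. by rewrite /mons /= inE. Qed.

Lemma mem_mons_ppow p j m : m \in mons (ppow p j) <-> sum_in (fun y => y \in mons p) j m.
Proof.
elim: j m => [|j IH] m; first by rewrite /mons /= inE; split => [/eqP|->].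
rewrite [ppow _ _]/= mem_mons_pmul /=.
by split=> [[a [b [Ha /IH Hb ->]]]|[y [m' [Hy /IH Hm' ->]]]]; [exists a, b | exists y, m'].
Qed.

Lemma coefs1_cat p q : coefs1 p -> coefs1 q -> coefs1 (p ++ q).
Proof. by rewrite /coefs1 all_cat => -> ->. Qed.

Lemma coefs1_flatten (I : Type) (r : seq I) (G : I -> mpoly K N) :
  (forall i, coefs1 (G i)) -> coefs1 (flatten [seq G i | i <- r]).
Proof. by move=> coefs_G; elim: r => //= i r IH; apply: coefs1_cat. Qed.

Lemma coefs1_pmul p q : coefs1 p -> coefs1 q -> coefs1 (pmul p q).
Proof.
move=> /allP coefs_p /allP coefs_q; apply/allP => t /allpairsP [[a b] [Ha Hb ->]] /=.
by rewrite (eqP (coefs_p a Ha)) (eqP (coefs_q b Hb)) mulr1.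
Qed.

Lemma coefs1_pone : coefs1 (pone K N).
Proof. by rewrite /coefs1 /= eqxx. Qed.

Lemma coefs1_pvar (v : var N) : coefs1 (pvar K v).
Proof. by rewrite /coefs1 /= eqxx. Qed.

Lemma coefs1_ppow p j : coefs1 p -> coefs1 (ppow p j).
Proof. by move=> coefs_p; elim: j => [|j IH]; [apply: coefs1_pone | apply: coefs1_pmul]. Qed.

Lemma coefs1_of_mons (r : seq (mon N)) : coefs1 [seq (y, 1%R) | y <- r].
Proof. by elim: r => //= y r IH; rewrite eqxx. Qed.

Lemma mons_of_mons (r : seq (mon N)) : mons [seq (y, 1%R) | y <- r] = r.
Proof. by rewrite /mons -map_comp map_id. Qed.

Lemma mem_mons_cAk k (j : 'I_N) m : m \in mons (cAk K N k j) <->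
  exists s w, [/\ size w = k, last s w = j & m = madd (mvar (vc s)) (edge_mon (edges (s :: w)))].
Proof.
elim: k j m => [|k IH] j m.
  rewrite mons_pvar; split => [/eqP ->|[s [w [size_w last_w ->]]]].
    by exists j, [::]; rewrite /= edge_mon0 maddm0.
  by case: w size_w last_w => //= _ ->; rewrite edge_mon0 maddm0.
split => [/mem_mons_flatten [i _ /mem_mons_pmul [a [b [/IH [s [w [size_w last_w ->]]] Hb ->]]]]|].
  move: Hb; rewrite mons_pvar => /eqP ->.
  exists s, (rcons w j); rewrite size_rcons last_rcons size_w.
  by rewrite edges_rcons edge_mon_rcons last_w maddA.
case=> s [w [size_w last_w ->]]; case/lastP: w size_w last_w => // w i.
rewrite size_rcons last_rcons => -[size_w] <-.
apply/mem_mons_flatten; exists (last s w); first by rewrite mem_enum.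
apply/mem_mons_pmul.
exists (madd (mvar (vc s)) (edge_mon (edges (s :: w)))), (mvar (vA (last s w) i)).
split; first by apply/IH; exists s, w.
  by rewrite mons_pvar.
by rewrite edges_rcons edge_mon_rcons maddA.
Qed.

Lemma coefs1_cAk k (j : 'I_N) : coefs1 (cAk K N k j).
Proof.
elim: k j => [|k IH] j; first exact: coefs1_pvar.
by apply: coefs1_flatten => i; apply: coefs1_pmul; last exact: coefs1_pvar.
Qed.

Lemma coefs1_SN n : coefs1 (SN K N n).
Proof.
by apply: coefs1_flatten => j; apply: coefs1_pmul; [apply: coefs1_cAk | apply: coefs1_pvar].
Qed.

Lemma mem_mons_SN n m : m \in mons (SN K N n) <-> exists s w, size w = n /\ m = walk_mon s w.
Proof.
split => [/mem_mons_flatten [j _ /mem_mons_pmul [a [b [/mem_mons_cAk Ha Hb ->]]]]|].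
  have [s [w [size_w last_w ->]]] := Ha.
  by move: Hb; rewrite mons_pvar => /eqP ->; exists s, w; rewrite /walk_mon last_w.
case=> s [w [size_w ->]]; apply/mem_mons_flatten; exists (last s w); first by rewrite mem_enum.
apply/mem_mons_pmul.
exists (madd (mvar (vc s)) (edge_mon (edges (s :: w)))), (mvar (vb (last s w))).
by split; [apply/mem_mons_cAk; exists s, w | rewrite mons_pvar |].
Qed.

Lemma mem_mons_smul f g n m : m \in mons (smul f g n) <->
  exists i a b, [/\ i <= n, a \in mons (f i), b \in mons (g (n - i)) & m = madd a b].
Proof.
split => [/mem_mons_flatten [i]|[i [a [b [le_in Ha Hb ->]]]]].
  by rewrite mem_iota ltnS => le_in /mem_mons_pmul [a [b [Ha Hb ->]]]; exists i, a, b.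
by apply/mem_mons_flatten; exists i; rewrite ?mem_iota //; apply/mem_mons_pmul; exists a, b.
Qed.

Lemma mem_mons_ssum rho (G : nat -> series K N) n m :
  m \in mons (ssum rho G n) <-> exists2 i, i < rho & m \in mons (G i n).
Proof.
split => [/mem_mons_flatten [i]|[i lt_i Hm]]; first by rewrite mem_iota; exists i.
by apply/mem_mons_flatten; exists i; rewrite ?mem_iota.
Qed.

Lemma mons_smono p k n : mons (smono p k n) = if n == k then mons p else [::].
Proof. by rewrite /smono; case: (n == k). Qed.

Lemma mons_sstar p c n : mons (sstar p c n) = if c %| n then mons (ppow p (n %/ c)) else [::].
Proof. by rewrite /sstar; case: (c %| n). Qed.

Lemma coefs1_smul f g n : (forall i, coefs1 (f i)) -> (forall i, coefs1 (g i)) ->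
  coefs1 (smul f g n).
Proof. by move=> coefs_f coefs_g; apply: coefs1_flatten => i; apply: coefs1_pmul. Qed.

Lemma coefs1_ssum rho (G : nat -> series K N) n :
  (forall i k, coefs1 (G i k)) -> coefs1 (ssum rho G n).
Proof. by move=> coefs_G; apply: coefs1_flatten. Qed.

Lemma coefs1_smono p k n : coefs1 p -> coefs1 (smono p k n).
Proof. by rewrite /smono; case: (n == k). Qed.

Lemma coefs1_sstar p c n : coefs1 p -> coefs1 (sstar p c n).
Proof. by move=> coefs_p; rewrite /sstar; case: (c %| n) => //; apply: coefs1_ppow. Qed.

Lemma mem_mons_shifted_sum T F rho (mu : nat -> nat) (u q : nat -> mpoly K N) n m :
  m \in mons (smul (smono (pone K N) T)
                (ssum rho (fun i => smul (smono (u i) (mu i)) (sstar (q i) F))) n) <->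
  T <= n /\ exists i, [/\ i < rho, mu i <= n - T, F %| n - T - mu i &
    exists x y, [/\ x \in mons (u i), sum_in (fun y => y \in mons (q i)) ((n - T - mu i) %/ F) y &
                    m = madd x y]].
Proof.
split.
  case/mem_mons_smul => t [a [b [+ +]]]; rewrite mons_smono.
  case: eqVneq => [->|_] //= le_Tn; rewrite inE => /eqP -> /mem_mons_ssum [i lt_i].
  case/mem_mons_smul => t' [x [y [+ +]]]; rewrite mons_smono.
  case: eqVneq => [->|_] //= le_mu Hx; rewrite mons_sstar.
  case: ifP => // dvd_F /mem_mons_ppow sum_y -> ->.
  by split => //; exists i; split => //; exists x, y; rewrite madd0m.
case=> le_Tn [i [lt_i le_mu dvd_F [x [y [Hx sum_y ->]]]]].
apply/mem_mons_smul; exists T, (mon0 N), (madd x y); rewrite madd0m mons_smono eqxx inE eqxx.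
split => //; apply/mem_mons_ssum; exists i => //.
apply/mem_mons_smul; exists (mu i), x, y; rewrite mons_smono eqxx mons_sstar dvd_F.
by split => //; apply/mem_mons_ppow.
Qed.

Lemma psize_bounded_mons D p :
  (forall m, m \in mons p -> forall v, m v <= D) -> psize p <= D.+1 ^ (N + N * N + N).
Proof.
move=> le_D; apply: size_uniq_bounded_mons (undup_uniq _) _ => m.
by rewrite mem_undup => /mapP [t]; rewrite mem_filter => /andP [_ /(map_f fst) /le_D] + ->.
Qed.

End BinaryPolynomials.

Lemma fact_le_exp n : n`! <= 2 ^ (n * n).
Proof.
have fact_le_pow : n`! <= n ^ n.
  elim: n => // n IH; rewrite factS expnS leq_mul2l (leq_trans IH) ?orbT //.
  by case: n {IH} => // n; rewrite leq_exp2r.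
apply: leq_trans fact_le_pow _; rewrite expnM.
by case: n => // n; rewrite leq_exp2r // ltnW // ltn_expl.
Qed.

Lemma exp4_le_fact n : n ^ 4 <= 14 * n`!.
Proof.
elim: n => // n IH; case: (leqP n 3) => [|lt3n]; first by case: n {IH} => [|[|[|[|]]]].
rewrite factS mulnCA (leq_trans _ (leq_mul (leqnn n.+1) IH)) // [n.+1 ^ 4]expnS leq_mul2l.
by rewrite !expnS expn0; apply/orP; right; nia.
Qed.

Lemma kappa1_le N : N * (N * N).+1 + N * N <= 400 * N`!.
Proof. by have := exp4_le_fact N; rewrite !expnS expn0; nia. Qed.

(* The exponent vectors of all monomials involved are bounded by
   kappa1 N! + N! + 2, and there are 2N + N^2 variables. *)
Lemma size_bound_le N : 0 < N ->
  N`! * ((N * (N * N).+1 + N * N) * N`! + N`! + 3) ^ (N + N * N + N) <= 2 ^ (400 * N`!).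
Proof.
move=> N_gt0; set F := N`!; set k := N * (N * N).+1 + N * N.
have F_gt0 : 0 < F := fact_gt0 N.
have le_F : F <= 2 ^ (N * N) := fact_le_exp N.
have le_k4 : k + 4 <= 2 ^ (3 * N + 3).
  have : N <= 2 ^ N by rewrite ltnW // ltn_expl.
  rewrite expnD [3 * N]mulnC expnM; set t := 2 ^ N => le_Nt.
  have le3 : N * (N * N) <= t * (t * t) by rewrite !leq_mul.
  have : N <= N * (N * N) /\ N * N <= N * (N * N).
    by split; [apply: leq_pmulr | apply: leq_pmull]; rewrite ?muln_gt0 N_gt0.
  rewrite !expnS expn0 /k; nia.
have le_base : k * F + F + 3 <= 2 ^ (3 * N + 3 + N * N).
  by rewrite expnD (leq_trans _ (leq_mul le_k4 le_F)) // mulnDl; lia.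
have le_exp : N * N + (3 * N + 3 + N * N) * (N + N * N + N) <= 400 * F.
  by have := exp4_le_fact N; rewrite -/F !expnS expn0; nia.
have le_pow : (k * F + F + 3) ^ (N + N * N + N) <= (2 ^ (3 * N + 3 + N * N)) ^ (N + N * N + N).
  by rewrite leq_exp2r // !addn_gt0 N_gt0.
by apply: leq_trans (leq_mul le_F le_pow) _; rewrite -expnM -expnD leq_exp2l.
Qed.

Definition packages N F (x : mon N) : seq (mon N) :=
  [seq y <- mons_below N F |
     if excluded_middle_informative (cycle_sum (edge_supp x) F y) then true else false].

Lemma mem_packages N F (x y : mon N) : y \in packages F x <-> cycle_sum (edge_supp x) F y.
Proof.
rewrite mem_filter; case: excluded_middle_informative => [sum_y|] //=; split=> // _.
by apply: mem_mons_below; apply: cycle_sum_le sum_y.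
Qed.

Section Construction.
Variables (K : comPzSemiRingType) (N : nat).
Hypothesis N_gt0 : 0 < N.

Local Notation F := N`!.
Local Notation kappa1 := (N * (N * N).+1 + N * N).
(* T is at least N (N^2 + 1) + N (N F), the length beyond which a package can
   always be removed. *)
Local Notation T := (kappa1 * F).

Lemma dvdn_fact_small l : 0 < l <= N -> l %| F.
Proof. by move=> /andP [l_gt0 le_lN]; apply: dvdn_fact; rewrite l_gt0. Qed.

(* One term x X^mu (q_x X^F)^* per residue mu < F and monomial x of degree
   T + mu. *)
Definition heads : seq (nat * mon N) :=
  [seq (mu, x) | mu <- iota 0 F, x <- undup (mons (SN K N (T + mu)))].

Local Notation rho := (size heads).
Definition head_exp i : nat := (nth (0, mon0 N) heads i).1.
Definition head_mon i : mon N := (nth (0, mon0 N) heads i).2.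
Definition head_coef i : mpoly K N := [:: (head_mon i, 1%R)].
Definition period_coef i : mpoly K N := [seq (y, 1%R) | y <- packages F (head_mon i)].
Definition initial_part : series K N := fun n => if n < T then SN K N n else pzero K N.

Lemma head_spec i : i < rho ->
  head_exp i < F /\ exists s w, size w = T + head_exp i /\ head_mon i = walk_mon s w.
Proof.
move=> /(mem_nth (0, mon0 N)) /allpairsPdep [mu [x [+ + def_i]]].
rewrite /head_exp /head_mon def_i mem_iota mem_undup => /= mu_lt /mem_mons_SN.
by split.
Qed.

Lemma head_index mu s w : mu < F -> size w = T + mu ->
  exists2 i, i < rho & head_exp i = mu /\ head_mon i = walk_mon s w.
Proof.
move=> lt_mu size_w; have in_heads : (mu, walk_mon s w) \in heads.
  apply/allpairsPdep; exists mu, (walk_mon s w); split => //; first by rewrite mem_iota.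
  by rewrite mem_undup; apply/mem_mons_SN; exists s, w.
by exists (index (mu, walk_mon s w) heads); rewrite ?index_mem // /head_exp /head_mon nth_index.
Qed.

Lemma mem_mons_SN_tail n m : T <= n ->
  m \in mons (SN K N n) <-> exists i, [/\ i < rho, head_exp i <= n - T,
    F %| n - T - head_exp i &
    exists x y, [/\ x \in mons (head_coef i),
      sum_in (fun y => y \in mons (period_coef i)) ((n - T - head_exp i) %/ F) y &
      m = madd x y]].
Proof.
move=> le_Tn; have F_gt0 := fact_gt0 N.
have mons_q i y : (y \in mons (period_coef i)) <-> cycle_sum (edge_supp (head_mon i)) F y.
  by rewrite mons_of_mons; apply: mem_packages.
split.
  case/mem_mons_SN => s [w [size_w ->]].
  have long_T : N * (N * N).+1 + N * (N * F) <= T + (n - T) %% F.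
    by rewrite mulnDl mulnA -addnA leq_add ?leq_pmulr ?leq_addr.
  have size_w_split : size w = T + (n - T) %% F + (n - T) %/ F * F.
    by rewrite size_w; have := divn_eq (n - T) F; lia.
  have [w0 [y [size_w0 _ sum_y mon_w]]] :=
    walk_decompose s N_gt0 F_gt0 dvdn_fact_small long_T size_w_split.
  have [i lt_i [exp_i mon_i]] := head_index s (ltn_pmod _ F_gt0) size_w0.
  have r_mod : n - T - (n - T) %% F = (n - T) %/ F * F by rewrite {1}(divn_eq (n - T) F) addnK.
  exists i; rewrite exp_i r_mod mulnK // leq_mod dvdn_mull //; split => //.
  exists (head_mon i), y; split; first by rewrite inE.
    by apply: sum_in_mono sum_y => y' Hy'; apply/mons_q; rewrite mon_i.
  by rewrite mon_i.
case=> i [lt_i le_exp dvd_F [x [y [+ sum_y ->]]]]; rewrite inE => /eqP ->.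
have [_ [s [w [size_w mon_i]]]] := head_spec lt_i.
have [w' [size_w' mon_w' _]] : exists w', [/\ size w' = size w + (n - T - head_exp i) %/ F * F,
    walk_mon s w' = madd (walk_mon s w) y & edges (s :: w') =i edges (s :: w)].
  by apply: walk_extend; apply: sum_in_mono sum_y => y' /mons_q; rewrite mon_i.
apply/mem_mons_SN; exists s, w'; rewrite mon_i -mon_w'; split => //.
by rewrite size_w' size_w divnK //; lia.
Qed.

Lemma SN_decomposition n : (forall x : K, (x + x)%R = x) ->
  peq (SN K N n) (sadd initial_part (smul (smono (pone K N) T)
    (ssum rho (fun i => smul (smono (head_coef i) (head_exp i)) (sstar (period_coef i) F)))) n).
Proof.
move=> idemK; apply: peq_coefs1 => //; first exact: coefs1_SN.
  apply: coefs1_cat; first by rewrite /initial_part; case: ifP => // _; apply: coefs1_SN.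
  apply: coefs1_smul => i; first by apply: coefs1_smono; apply: coefs1_pone.
  apply: coefs1_ssum => i' k; apply: coefs1_smul => t.
    by apply: coefs1_smono; rewrite /coefs1 /= eqxx.
  by apply: coefs1_sstar; apply: coefs1_of_mons.
move=> m; rewrite mons_cat mem_cat /initial_part.
case: ltnP => [lt_nT|le_Tn].
  apply/idP/idP => [->//|/orP [//|/mem_mons_shifted_sum [le_Tn _]]].
  by move: lt_nT; rewrite ltnNge le_Tn.
apply/idP/idP => [/(mem_mons_SN_tail _ le_Tn) tail_m|].
  by apply/orP; right; apply/mem_mons_shifted_sum.
by case/mem_mons_shifted_sum => _ /(mem_mons_SN_tail _ le_Tn).
Qed.

Local Notation V := (N + N * N + N).

Lemma size_heads_le : rho <= F * (T + F + 3) ^ V.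
Proof.
rewrite size_allpairs_dep sumnE big_map big_seq.
apply: (@leq_trans (\sum_(mu <- iota 0 F | mu \in iota 0 F) (T + F + 3) ^ V)).
  apply: leq_sum => mu; rewrite mem_iota /= addnS => lt_mu.
  apply: size_uniq_bounded_mons (undup_uniq _) _ => m.
  rewrite mem_undup => /mem_mons_SN [s [w [size_w ->]]] v.
  by apply: leq_trans (walk_mon_le s w v) _; lia.
by rewrite -big_seq big_const_seq count_predT size_iota iter_addn_0 mulnC.
Qed.

Lemma psize_initial_part_le n : n < T -> psize (initial_part n) <= (T + F + 3) ^ V.
Proof.
move=> lt_nT; rewrite /initial_part lt_nT addnS.
apply: psize_bounded_mons => m /mem_mons_SN [s [w [size_w ->]]] v.
by apply: leq_trans (walk_mon_le s w v) _; lia.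
Qed.

Lemma psize_head_coef_le i : i < rho -> psize (head_coef i) <= (T + F + 3) ^ V.
Proof.
move=> /head_spec [lt_exp [s [w [size_w mon_i]]]]; rewrite addnS.
apply: psize_bounded_mons => m; rewrite inE => /eqP -> v.
by rewrite mon_i (leq_trans (walk_mon_le s w v)) //; lia.
Qed.

Lemma psize_period_coef_le i : psize (period_coef i) <= (T + F + 3) ^ V.
Proof.
rewrite addnS; apply: psize_bounded_mons => m; rewrite mons_of_mons => /mem_packages.
by move=> /cycle_sum_le le_F v; have := le_F v; lia.
Qed.

End Construction.

Local Open Scope ring_scope.

Theorem corollary2 :
  exists C : nat, (0 < C)%N /\
  forall (K : comPzSemiRingType) (N : nat),
    (forall x : K, x + x = x) -> (1 <= N)%N ->
    exists (kappa1 rho : nat) (mu : nat -> nat) (u q : nat -> mpoly K N)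
           (P : series K N),
      [/\ (kappa1 <= C * N`!)%N /\ (rho <= 2 ^ (C * N`!))%N,
          (forall i, (i < rho)%N -> (mu i <= N`! - 1)%N),
          (forall n, (kappa1 * N`! <= n)%N -> P n = pzero K N),
          (forall n,
             peq (SN K N n)
               (sadd P (smul (smono (pone K N) (kappa1 * N`!))
                  (ssum rho (fun i => smul (smono (u i) (mu i)) (sstar (q i) N`!)))) n))
        & (forall i, (i < kappa1 * N`!)%N -> (psize (P i) <= 2 ^ (C * N`!))%N) /\
          (forall i, (i < rho)%N ->
             (psize (u i) <= 2 ^ (C * N`!))%N /\ (psize (q i) <= 2 ^ (C * N`!))%N)].
Proof.
exists 400; split => // K N idemK N_gt0.
have le_size := size_bound_le N_gt0.
have le_psize := leq_trans (leq_pmull _ (fact_gt0 N)) le_size.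
exists (N * (N * N).+1 + N * N), (size (heads K N)), (head_exp K N), (head_coef K N),
  (period_coef K N), (initial_part K N); split.
- by split; [apply: kappa1_le | apply: leq_trans (size_heads_le K N_gt0) le_size].
- by move=> i /head_spec [lt_exp _]; lia.
- by move=> n; rewrite /initial_part ltnNge => ->.
- by move=> n; apply: SN_decomposition.
split => i lt_i; first by apply: leq_trans le_psize; apply: psize_initial_part_le.
by split; apply: leq_trans le_psize; [apply: psize_head_coef_le | apply: psize_period_coef_le].
Qed.
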